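(* Let $t$ and $l$ be positive integers with $l\ge 6$. There exists $k_0=k_0(t,l)$ such that for every $k\ge k_0$, whenever the edge set of $\widetilde O_{k+1}$ is partitioned into $t$ parts, the subgraph formed by one of the parts contains a cycle of length $2l$.
   Context: For positive integers $n\ge k+1$, the doubled Johnson graph $J(n;k,k+1)$ is the bipartite graph with vertex set $\binom{[n]}{k}\cup\binom{[n]}{k+1}$ (subsets of $[n]=\{1,\dots,n\}$), where two vertices $u,v$ are adjacent iff $u\subset v$ or $v\subset u$. The doubled Odd graph is $\widetilde O_{k+1}=J(2k+1;k,k+1)$. *)

From mathcomp Require Import all_boot.
Set Implicit Arguments. Unset Strict Implicit. Unset Printing Implicit Defensive.

Definition dj_vertex (n k : nat) (A : {set 'I_n}) : bool :=
  (#|A| == k) || (#|A| == k.+1).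

(* Adjacency in J(n;k,k+1): both vertices, and one properly contains the other
   (for vertices of sizes k,k+1 this is exactly u ⊂ v or v ⊂ u). *)
Definition dj_adj (n k : nat) (A B : {set 'I_n}) : bool :=
  [&& dj_vertex k A, dj_vertex k B & (A \proper B) || (B \proper A)].

(* An edge {A,B} is stored with its smaller endpoint first. *)
Definition dj_edge_key (n : nat) (A B : {set 'I_n}) : {set 'I_n} * {set 'I_n} :=
  if A \proper B then (A, B) else (B, A).

(* A t-partition of the edge set is a colouring of the (normalised) edges by
   'I_t. *)
Definition has_mono_cycle (m : nat) (n k t : nat)
  (c : {set 'I_n} * {set 'I_n} -> 'I_t) (i : 'I_t) : Prop :=
  exists v : 'I_m -> {set 'I_n},
    injective v /\
    forall j : 'I_m, forall j' : 'I_m, j' = (j.+1 %% m) :> nat ->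
      dj_adj k (v j) (v j') /\ c (dj_edge_key (v j) (v j')) = i.

From mathcomp Require Import all_boot zify.
From Stdlib Require Import FunctionalExtensionality.
Set Implicit Arguments. Unset Strict Implicit. Unset Printing Implicit Defensive.

(* Split [n] into d = 3t+1 blocks of size M followed by a core of k+1-d
   elements.  A point y with y_j < M picks the element j*M + y_j of block j;
   the (k+1)-set U(y) consists of all picked elements and the core, and
   D_j(y) = U(y) minus the element picked in block j is a k-set below U(y).
   Colour the point y by the vector of colours of its d edges D_j(y) U(y).
   A product Ramsey theorem (iterated pigeonhole, [box_ramsey]) gives
   injections g_j : [l] -> [M] on whose image box this vector is constant;
   by pigeonhole three blocks h_0, h_1, h_2 then carry one colour i.  Along
   these three blocks, points of the grid [l]^3 give vertices U and
   axis-parallel lines give vertices D_j, with incidence giving edges of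
   colour i; an explicit closed walk in [l]^3 ([walk], [grid_cycle]) turns
   this incidence structure into a 2l-cycle. *)

(* Every element of s has exactly one colour. *)
Lemma sum_colour_counts (I : eqType) (T : finType) (f : I -> T) (s : seq I) :
  \sum_(col : T) count (fun z => f z == col) s = size s.
Proof.
rewrite -sum1_size (partition_big f predT) //=.
by apply: eq_bigr => col _; rewrite sum1_count.
Qed.

Lemma large_colour_class (T : finType) (r : nat) (f : nat -> T) :
  exists col : T, r <= count (fun z => f z == col) (iota 0 (r * #|T| + 1)).
Proof.
apply/existsP; apply: contraT => /existsPn small.
have : \sum_(col : T) count (fun z => f z == col) (iota 0 (r * #|T| + 1))
         <= \sum_(col : T) r.-1.
  by apply: leq_sum => col _; move: (small col); rewrite -ltnNge; lia.
rewrite sum_colour_counts size_iota sum_nat_const cardE -cardT.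
have : #|T| * r.-1 <= r * #|T| by rewrite mulnC leq_mul2r leq_pred orbT.
lia.
Qed.

Lemma pigeonhole (T : finType) (r : nat) (f : nat -> T) :
  exists (col : T) (h : nat -> nat),
    [/\ forall x, x < r -> h x < r * #|T| + 1,
        forall x y, x < r -> y < r -> h x = h y -> x = y
      & forall x, x < r -> f (h x) = col].
Proof.
have [col large] := large_colour_class r f.
rewrite -size_filter in large; set s := filter _ _ in large.
have s_uniq : uniq s by rewrite filter_uniq // iota_uniq.
have mem_s x : x < r -> nth 0 s x \in s by move=> x_lt; apply/mem_nth/(leq_trans x_lt).
exists col, (nth 0 s); split.
- by move=> x /mem_s; rewrite mem_filter mem_iota => /and3P [].
- move=> x y x_lt y_lt /eqP; rewrite nth_uniq //; first by move/eqP.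
  + exact: leq_trans x_lt large.
  + exact: leq_trans y_lt large.
- by move=> x /mem_s; rewrite mem_filter => /andP [/eqP].
Qed.

(* The image of the point x of [r]^d under the coordinate maps g_j; the
   coordinates j >= d are set to 0 so that points are canonical. *)
Definition box_pt (d : nat) (g : nat -> nat -> nat) (x : nat -> nat) : nat -> nat :=
  fun j => if j < d then g j (x j) else 0.

(* Induction on
   d: colour a (d-1)-dimensional point by the colouring of its fibre in the
   last coordinate, then use pigeonhole inside the monochromatic fibre. *)
Lemma box_ramsey (d r : nat) (T : finType) : exists N : nat,
  forall chi : (nat -> nat) -> T, exists (g : nat -> nat -> nat) (col : T),
  [/\ forall j x, j < d -> x < r -> g j x < N,
      forall j x y, j < d -> x < r -> y < r -> g j x = g j y -> x = y
    & forall x, (forall j, j < d -> x j < r) -> chi (box_pt d g x) = col].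
Proof.
elim: d T => [|d IH] T.
  by exists 0 => chi; exists (fun _ _ => 0), (chi (fun _ => 0)).
pose N0 := r * #|T| + 1.
have [N1 box1] := IH {ffun 'I_N0 -> T}.
exists (maxn N1 N0) => chi.
pose extend (y : nat -> nat) (z : nat) (j : nat) :=
  if j < d then y j else if j == d then z else 0.
have [g1 [col1 [g1_lt g1_inj col1_box]]] :=
  box1 (fun y => [ffun z : 'I_N0 => chi (extend y (val z))]).
have z0 : 'I_N0 by exists 0; rewrite /N0 addn1.
have [col [h [h_lt h_inj h_col]]] := pigeonhole r (fun z => col1 (insubd z0 z)).
exists (fun j => if j < d then g1 j else h), col; split.
- move=> j x j_lt x_lt; case: ifP => j_d.
    by rewrite leq_max g1_lt.
  by rewrite leq_max h_lt ?orbT.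
- by move=> j x y j_lt; case: ifP => j_d; [apply: g1_inj | apply: h_inj].
- move=> x x_lt; have x_d := x_lt d (ltnSn d).
  have val_z : val (insubd z0 (h (x d))) = h (x d) by rewrite insubdK //; apply: h_lt.
  have /col1_box : forall j, j < d -> x j < r by move=> j j_lt; apply: x_lt; lia.
  move/(congr1 (fun f : {ffun 'I_N0 -> T} => f (insubd z0 (h (x d))))).
  rewrite h_col // ffunE val_z => <-.
  congr chi; apply: functional_extensionality => j.
  rewrite /extend /box_pt; case: (ltngtP j d) => [j_lt | j_gt | ->].
  + by rewrite ltnS ltnW.
  + by rewrite ltnS leqNgt j_gt.
  + by rewrite ltnSn.
Qed.

Definition point3 (x y z : nat) : nat -> nat :=
  fun m => if m == 0 then x else if m == 1 then y else z.

(* A closed walk P_0, ..., P_(l-1) in [l]^3 visiting l distinct points: a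
   staircase in the plane z = 0 from (0,0,0) to (a,b,0) with
   a = ceil((l-4)/2), b = floor((l-4)/2), then (a,b,1), (0,b,1), (0,0,1). *)
Definition walk (l q : nat) : nat -> nat :=
  if q <= l - 4 then point3 (q - q %/ 2) (q %/ 2) 0
  else if q == l - 3 then point3 ((l - 4) - (l - 4) %/ 2) ((l - 4) %/ 2) 1
  else if q == l - 2 then point3 0 ((l - 4) %/ 2) 1
  else point3 0 0 1.

(* The coordinate in which P_(q-1) and P_q differ (P_(-1) = P_(l-1)). *)
Definition step (l q : nat) : nat :=
  if q == 0 then 2
  else if q <= l - 4 then (if q %% 2 == 1 then 0 else 1)
  else if q == l - 3 then 2
  else if q == l - 2 then 0
  else 1.

(* Case on every conditional of the goal and the context; the facts about
   [walk] below are finitely many linear-arithmetic checks per case. *)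
Ltac case_ifs :=
  let split_ifs := repeat (cbv beta; match goal with
    | |- context [if _ then _ else _] => case: ifP => ?
    | H : context [if _ then _ else _] |- _ => move: H; case: ifP => ? H
    end) in
  split_ifs; simpl; split_ifs.

Lemma step_lt3 l q : step l q < 3.
Proof. by rewrite /step; case_ifs. Qed.

Lemma walk_lt l q m : 6 <= l -> walk l q m < l.
Proof. by move=> *; rewrite /walk /point3; case_ifs; lia. Qed.

Lemma walk_inj l q q' : 6 <= l -> q < l -> q' < l ->
  (forall m, m < 3 -> walk l q m = walk l q' m) -> q = q'.
Proof.
move=> l_ge q_lt q'_lt eq_walk.
move: (eq_walk 0 erefl) (eq_walk 1 erefl) (eq_walk 2 erefl).
by rewrite /walk /point3 /=; case_ifs; lia.
Qed.

Lemma line_inj l q q' : 6 <= l -> q < l -> q' < l -> step l q = step l q' ->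
  (forall m, m < 3 -> m != step l q -> walk l q m = walk l q' m) -> q = q'.
Proof.
move=> l_ge q_lt q'_lt eq_step eq_walk.
move: (eq_walk 0 erefl) (eq_walk 1 erefl) (eq_walk 2 erefl) eq_step.
by rewrite /walk /point3 /step /=; case_ifs; lia.
Qed.

Lemma walk_next l q m : 6 <= l -> q < l -> m < 3 -> m != step l (q.+1 %% l) ->
  walk l q m = walk l (q.+1 %% l) m.
Proof.
move=> l_ge q_lt m_lt.
have [[-> q_eq] | [-> q_lt']] : (q.+1 %% l = 0 /\ q.+1 = l) \/ (q.+1 %% l = q.+1 /\ q.+1 < l).
  case: (ltngtP q.+1 l) => [lt | gt | eq]; [right | lia | left].
  - by rewrite modn_small.
  - by rewrite eq modnn.
all: by rewrite /walk /point3 /step; case_ifs; lia.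
Qed.

Definition in_grid (l : nat) (p : nat -> nat) : Prop := forall m, m < 3 -> p m < l.

Lemma cycle_succ (l j j' : nat) : j < 2 * l -> j' = j.+1 %% (2 * l) ->
  if j %% 2 == 0 then j' %% 2 = 1 /\ j' %/ 2 = j %/ 2
  else j' %% 2 = 0 /\ j' %/ 2 = (j %/ 2).+1 %% l.
Proof.
move=> j_lt ->; have [lt | gt | eq] := ltngtP j.+1 (2 * l).
- rewrite (modn_small lt); case: ifP => j_even; first lia.
  by rewrite (@modn_small (j %/ 2).+1 l); lia.
- lia.
- have -> : (j %/ 2).+1 = l by lia.
  by rewrite eq !modnn; case: ifP; lia.
Qed.

(* A graph E containing a faithful copy of the point-line incidence structure
   of [l]^3 -- distinct points P p, distinct axis-parallel lines L m p, each
   line adjacent (both ways) to the points on it -- contains a 2l-cycle: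
   alternately the lines and points of the closed walk. *)
Section GridCycle.
Variables (V : Type) (E : V -> V -> Prop) (l : nat).
Hypothesis l_ge6 : 6 <= l.
Variables (P : (nat -> nat) -> V) (L : nat -> (nat -> nat) -> V).

Hypothesis P_inj : forall p p', in_grid l p -> in_grid l p' -> P p = P p' ->
  forall m, m < 3 -> p m = p' m.
Hypothesis L_inj : forall m m' p p', m < 3 -> m' < 3 -> in_grid l p -> in_grid l p' ->
  L m p = L m' p' -> m = m' /\ forall m0, m0 < 3 -> m0 != m -> p m0 = p' m0.
Hypothesis L_neq_P : forall m p p', m < 3 -> in_grid l p -> in_grid l p' -> L m p <> P p'.
Hypothesis L_local : forall m p p', m < 3 ->
  (forall m0, m0 < 3 -> m0 != m -> p m0 = p' m0) -> L m p = L m p'.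
Hypothesis incident : forall m p, m < 3 -> in_grid l p -> E (L m p) (P p) /\ E (P p) (L m p).

Lemma grid_cycle : exists v : 'I_(2 * l) -> V, injective v /\
  forall j j' : 'I_(2 * l), j' = j.+1 %% (2 * l) :> nat -> E (v j) (v j').
Proof.
have walk_grid q : in_grid l (walk l q) by move=> m _; apply: walk_lt.
have step3 := step_lt3 l.
pose v (j : 'I_(2 * l)) := let q := j %/ 2 in
  if j %% 2 == 0 then L (step l q) (walk l q) else P (walk l q).
exists v; split.
  move=> j1 j2; rewrite /v.
  have q1_lt : j1 %/ 2 < l by have := ltn_ord j1; lia.
  have q2_lt : j2 %/ 2 < l by have := ltn_ord j2; lia.
  have walk_grid1 := walk_grid (j1 %/ 2); have walk_grid2 := walk_grid (j2 %/ 2).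
  case: ifP => j1_even; case: ifP => j2_even eq_v.
  - have [eq_step eq_walk] := L_inj (step3 _) (step3 _) walk_grid1 walk_grid2 eq_v.
    have := line_inj l_ge6 q1_lt q2_lt eq_step eq_walk.
    by move=> eq_q; apply: ord_inj; lia.
  - by case: (L_neq_P (step3 _) walk_grid1 walk_grid2 eq_v).
  - by case: (L_neq_P (step3 _) walk_grid2 walk_grid1 (esym eq_v)).
  - have := walk_inj l_ge6 q1_lt q2_lt (P_inj walk_grid1 walk_grid2 eq_v).
    by move=> eq_q; apply: ord_inj; lia.
move=> j j' /(cycle_succ (ltn_ord j)); rewrite /v.
have q_lt : j %/ 2 < l by have := ltn_ord j; lia.
case: ifP => j_even [-> ->] /=.
  exact: (incident (step3 _) (walk_grid _)).1.
rewrite (L_local (p' := walk l (j %/ 2)) (step3 _)).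
  exact: (incident (step3 _) (walk_grid _)).2.
by move=> m m_lt m_ne; rewrite (walk_next l_ge6 q_lt m_lt m_ne).
Qed.

End GridCycle.

Lemma card_set_of_seq (n : nat) (s : seq nat) : uniq s -> all (fun a => a < n) s ->
  #|[set a : 'I_n | val a \in s]| = size s.
Proof.
elim: s => [|x s IH] /=.
  by move=> _ _; apply/eqP; rewrite cards_eq0; apply/eqP/setP => a; rewrite !inE.
move=> /andP [x_notin s_uniq] /andP [x_lt s_lt].
have -> : [set a : 'I_n | val a \in x :: s] = Ordinal x_lt |: [set a | val a \in s].
  by apply/setP => a; rewrite !inE -val_eqE.
by rewrite cardsU1 IH // inE /= x_notin.
Qed.

Definition slot (M j x : nat) : nat := j * M + x.

Lemma slot_lt (d M j x : nat) : j < d -> x < M -> slot M j x < d * M.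
Proof. by move=> j_lt x_lt; rewrite /slot; nia. Qed.

Lemma slot_inj (M j j' x x' : nat) :
  x < M -> x' < M -> slot M j x = slot M j' x' -> j = j' /\ x = x'.
Proof.
move=> x_lt x'_lt eq_slot; have M_gt0 : 0 < M by lia.
have := congr1 (divn^~ M) eq_slot; have := congr1 (modn^~ M) eq_slot.
by rewrite /slot /= !modnMDl !divnMDl // !modn_small // !divn_small // !addn0.
Qed.

(* The block encoding of vertices of J(n; k, k+1): d blocks of size M,
   followed by the core [dM, dM + k+1-d). *)
Section BlockEncoding.
Variables (n k d M : nat).

Definition fits (y : nat -> nat) : Prop := forall j, j < d -> y j < M.

Definition block_seq (y : nat -> nat) (J : seq nat) : seq nat :=
  map (fun j => slot M j (y j)) J ++ iota (d * M) (k.+1 - d).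

Definition block_set (y : nat -> nat) (J : seq nat) : {set 'I_n} :=
  [set a : 'I_n | val a \in block_seq y J].

Definition top_vertex (y : nat -> nat) : {set 'I_n} := block_set y (iota 0 d).
Definition low_vertex (j : nat) (y : nat -> nat) : {set 'I_n} :=
  block_set y (rem j (iota 0 d)).

Lemma iota_lt j : j \in iota 0 d -> j < d.
Proof. by rewrite mem_iota. Qed.

Lemma rem_iota_lt j0 j : j \in rem j0 (iota 0 d) -> j < d.
Proof. by move/mem_rem/iota_lt. Qed.

Lemma mem_rem_iota j0 j : j < d -> (j \in rem j0 (iota 0 d)) = (j != j0).
Proof. by move=> j_lt; rewrite mem_rem_uniq ?iota_uniq // inE mem_iota leq0n add0n j_lt !andbT. Qed.

Lemma sub_block_set y J J' : {subset J <= J'} -> block_set y J \subset block_set y J'.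
Proof.
move=> sub_J; apply/subsetP => a; rewrite !inE !mem_cat.
case/orP => [/mapP [j j_in ->] | ->]; last by rewrite orbT.
by apply/orP; left; apply/mapP; exists j; first exact: sub_J.
Qed.

Lemma eq_block_set y y' J : {in J, y =1 y'} -> block_set y J = block_set y' J.
Proof.
move=> eq_y; rewrite /block_set /block_seq.
suff -> : [seq slot M j (y j) | j <- J] = [seq slot M j (y' j) | j <- J] by [].
by apply/eq_in_map => j /eq_y ->.
Qed.

Lemma low_vertex_local j y y' : (forall j', j' < d -> j' != j -> y j' = y' j') ->
  low_vertex j y = low_vertex j y'.
Proof.
move=> eq_y; apply: eq_block_set => j' j'_in; apply: eq_y; first exact: rem_iota_lt j'_in.
by rewrite -mem_rem_iota // (rem_iota_lt j'_in).
Qed.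

Section Picks.
Variables (y : nat -> nat) (J : seq nat).
Hypotheses (y_fits : fits y) (J_lt : forall j, j \in J -> j < d).

Lemma mem_block_seq j x : j < d -> x < M ->
  (slot M j x \in block_seq y J) = (j \in J) && (y j == x).
Proof.
move=> j_lt x_lt; rewrite /block_seq mem_cat mem_iota.
rewrite [_ <= _](_ : _ = false) ?andFb ?orbF; last by have := slot_lt j_lt x_lt; lia.
apply/mapP/andP => [[j' j'_in eq_slot] | [j_in /eqP <-]]; last by exists j.
have [<- <-] := slot_inj (y_fits (J_lt j'_in)) x_lt (esym eq_slot).
by rewrite j'_in.
Qed.

Lemma block_seq_uniq : uniq J -> uniq (block_seq y J).
Proof.
move=> J_uniq; rewrite /block_seq cat_uniq iota_uniq andbT; apply/andP; split.
  rewrite map_inj_in_uniq // => j j' j_in j'_in eq_slot.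
  by have [] := slot_inj (y_fits (J_lt j_in)) (y_fits (J_lt j'_in)) eq_slot.
apply/hasPn => a; rewrite mem_iota => /andP [a_ge _]; apply/mapP => [[j j_in eq_a]].
by have := slot_lt (J_lt j_in) (y_fits (J_lt j_in)); lia.
Qed.

End Picks.

Section Membership.
Variables (y : nat -> nat).
Hypothesis y_fits : fits y.

Lemma mem_top_vertex (a : 'I_n) j x : j < d -> x < M -> val a = slot M j x ->
  (a \in top_vertex y) = (y j == x).
Proof.
move=> j_lt x_lt a_eq; rewrite inE a_eq (mem_block_seq y_fits iota_lt) //.
by rewrite mem_iota j_lt.
Qed.

Lemma mem_low_vertex (a : 'I_n) j0 j x : j < d -> x < M -> val a = slot M j x ->
  (a \in low_vertex j0 y) = (j != j0) && (y j == x).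
Proof.
move=> j_lt x_lt a_eq; rewrite inE a_eq (mem_block_seq y_fits (@rem_iota_lt j0)) //.
by rewrite mem_rem_iota.
Qed.

End Membership.

Hypothesis room : d * M + (k.+1 - d) <= n.

Lemma slot_lt_n j x : j < d -> x < M -> slot M j x < n.
Proof. by move=> j_lt x_lt; have := slot_lt j_lt x_lt; lia. Qed.

Lemma card_block_set y J : fits y -> (forall j, j \in J -> j < d) -> uniq J ->
  #|block_set y J| = size J + (k.+1 - d).
Proof.
move=> y_fits J_lt J_uniq; rewrite card_set_of_seq ?block_seq_uniq //.
  by rewrite size_cat size_map size_iota.
apply/allP => a; rewrite mem_cat mem_iota => /orP [/mapP [j j_in ->] | /andP [_ a_lt]].
  by have := slot_lt (J_lt j j_in) (y_fits j (J_lt j j_in)); lia.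
lia.
Qed.

Lemma top_vertex_inj y y' : fits y -> fits y' -> top_vertex y = top_vertex y' ->
  forall j, j < d -> y j = y' j.
Proof.
move=> y_fits y'_fits eq_top j j_lt.
pose a := Ordinal (slot_lt_n j_lt (y_fits j j_lt)).
have : a \in top_vertex y by rewrite (mem_top_vertex y_fits j_lt (y_fits j j_lt)).
by rewrite eq_top (mem_top_vertex y'_fits j_lt (y_fits j j_lt)) // => /eqP.
Qed.

Lemma low_vertex_inj j1 j2 y y' : j1 < d -> j2 < d -> fits y -> fits y' ->
  low_vertex j1 y = low_vertex j2 y' ->
  j1 = j2 /\ forall j, j < d -> j != j1 -> y j = y' j.
Proof.
move=> j1_lt j2_lt y_fits y'_fits eq_low.
have agree j : j < d -> j != j1 -> j != j2 /\ y j = y' j.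
  move=> j_lt j_ne; pose a := Ordinal (slot_lt_n j_lt (y_fits j j_lt)).
  have : a \in low_vertex j1 y.
    by rewrite (mem_low_vertex y_fits j1 j_lt (y_fits j j_lt)) // j_ne eqxx.
  by rewrite eq_low (mem_low_vertex y'_fits j2 j_lt (y_fits j j_lt)) // => /andP [-> /eqP].
split; last by move=> j j_lt /(agree j j_lt) [].
by apply/eqP; apply: contraT => j_ne; have [] := agree j2 j2_lt; rewrite 1?eq_sym ?eqxx.
Qed.

Hypothesis d_le : d <= k.+1.

Section Cardinality.
Variables (y : nat -> nat).
Hypothesis y_fits : fits y.

Lemma card_top_vertex : #|top_vertex y| = k.+1.
Proof. by rewrite card_block_set ?iota_uniq ?size_iota //; [lia | apply: iota_lt]. Qed.

Lemma card_low_vertex j : j < d -> #|low_vertex j y| = k.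
Proof.
move=> j_lt; rewrite card_block_set ?rem_uniq ?iota_uniq //; last exact: rem_iota_lt.
by rewrite size_rem ?size_iota ?mem_iota //; lia.
Qed.

Lemma low_proper_top j : j < d -> low_vertex j y \proper top_vertex y.
Proof.
move=> j_lt; rewrite properEcard card_low_vertex // card_top_vertex ltnSn andbT.
by apply: sub_block_set => j'; apply: mem_rem.
Qed.

Lemma low_top_edge j : j < d ->
  [/\ dj_adj k (low_vertex j y) (top_vertex y), dj_adj k (top_vertex y) (low_vertex j y),
      dj_edge_key (low_vertex j y) (top_vertex y) = (low_vertex j y, top_vertex y)
    & dj_edge_key (top_vertex y) (low_vertex j y) = (low_vertex j y, top_vertex y)].
Proof.
move=> j_lt; have low_top := low_proper_top j_lt.
have top_low : ~~ (top_vertex y \proper low_vertex j y).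
  by rewrite properEcard card_low_vertex // card_top_vertex // ltnNge leqnSn andbF.
have [low_v top_v] : dj_vertex k (low_vertex j y) /\ dj_vertex k (top_vertex y).
  by rewrite /dj_vertex card_low_vertex // card_top_vertex !eqxx orbT.
by rewrite /dj_adj /dj_edge_key low_v top_v low_top (negbTE top_low) orbT.
Qed.

End Cardinality.

Lemma low_neq_top j y y' : j < d -> fits y -> fits y' -> low_vertex j y <> top_vertex y'.
Proof.
move=> j_lt y_fits y'_fits eq_v.
by have := card_low_vertex y_fits j_lt; rewrite eq_v card_top_vertex //; lia.
Qed.

End BlockEncoding.

Section GridEmbedding.
Variables (d N l : nat) (g : nat -> nat -> nat) (h : nat -> nat).
Hypotheses (l_gt0 : 0 < l)
  (g_lt : forall j x, j < d -> x < l -> g j x < N)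
  (g_inj : forall j x x', j < d -> x < l -> x' < l -> g j x = g j x' -> x = x')
  (h_lt : forall m, m < 3 -> h m < d)
  (h_inj : forall m m', m < 3 -> m' < 3 -> h m = h m' -> m = m').

Definition spread (p : nat -> nat) (j : nat) : nat :=
  if j == h 0 then p 0 else if j == h 1 then p 1 else if j == h 2 then p 2 else 0.

Definition embed (p : nat -> nat) : nat -> nat := box_pt d g (spread p).

Lemma eq_h m m' : m < 3 -> m' < 3 -> (h m == h m') = (m == m').
Proof. by move=> m_lt m'_lt; apply/eqP/eqP => [/(h_inj m_lt m'_lt) | ->]. Qed.

Lemma spread_at p m : m < 3 -> spread p (h m) = p m.
Proof.
rewrite /spread; case: m => [|[|[|]]] // _; first by rewrite eqxx.
  by rewrite eq_h // eqxx.
by rewrite !eq_h // eqxx.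
Qed.

Lemma spread_local p p' m : (forall m0, m0 < 3 -> m0 != m -> p m0 = p' m0) ->
  forall j, j != h m -> spread p j = spread p' j.
Proof.
move=> eq_p j j_ne.
have eq_at m0 : m0 < 3 -> j = h m0 -> p m0 = p' m0.
  move=> m0_lt j_eq; apply: eq_p => //; apply: contraNneq j_ne => m0_eq.
  by rewrite j_eq m0_eq.
rewrite /spread; case: eqP => [/(eq_at 0 erefl) -> // | _].
case: eqP => [/(eq_at 1 erefl) -> // | _].
by case: eqP => [/(eq_at 2 erefl) -> // | _].
Qed.

Lemma spread_lt p : in_grid l p -> forall j, spread p j < l.
Proof. by move=> p_grid j; rewrite /spread; do 3?case: ifP => _; rewrite ?p_grid. Qed.

Lemma embed_fits p : in_grid l p -> fits d N (embed p).
Proof. by move=> p_grid j j_lt; rewrite /embed /box_pt j_lt g_lt ?spread_lt. Qed.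

Lemma embed_at p m : m < 3 -> embed p (h m) = g (h m) (p m).
Proof. by move=> m_lt; rewrite /embed /box_pt h_lt // spread_at. Qed.

Lemma embed_at_inj p p' m : in_grid l p -> in_grid l p' -> m < 3 ->
  embed p (h m) = embed p' (h m) -> p m = p' m.
Proof. by move=> p_grid p'_grid m_lt; rewrite !embed_at //; apply: g_inj; auto. Qed.

Lemma embed_local p p' m : (forall m0, m0 < 3 -> m0 != m -> p m0 = p' m0) ->
  forall j, j != h m -> embed p j = embed p' j.
Proof. by move=> eq_p j j_ne; rewrite /embed /box_pt (spread_local eq_p j_ne). Qed.

End GridEmbedding.

Section EmbeddedCycle.
Variables (n k d N l t : nat) (g : nat -> nat -> nat) (h : nat -> nat).
Variables (c : {set 'I_n} * {set 'I_n} -> 'I_t) (i : 'I_t).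
Hypotheses (l_ge6 : 6 <= l) (d_le : d <= k.+1) (room : d * N + (k.+1 - d) <= n)
  (g_lt : forall j x, j < d -> x < l -> g j x < N)
  (g_inj : forall j x x', j < d -> x < l -> x' < l -> g j x = g j x' -> x = x')
  (h_lt : forall m, m < 3 -> h m < d)
  (h_inj : forall m m', m < 3 -> m' < 3 -> h m = h m' -> m = m').
Hypothesis colour : forall p m, in_grid l p -> m < 3 ->
  c (low_vertex n k d N (h m) (embed d g h p), top_vertex n k d N (embed d g h p)) = i.

Lemma embedded_mono_cycle : has_mono_cycle (2 * l) k c i.
Proof.
have l_gt0 : 0 < l by lia.
have fits_p p : in_grid l p -> fits d N (embed d g h p) by apply: embed_fits.
apply: (@grid_cycle _ (fun A B => dj_adj k A B /\ c (dj_edge_key A B) = i) _ l_ge6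
  (fun p => top_vertex n k d N (embed d g h p))
  (fun m p => low_vertex n k d N (h m) (embed d g h p))).
- move=> p p' p_grid p'_grid eq_top m m_lt.
  apply: (embed_at_inj g_inj h_lt h_inj p_grid p'_grid m_lt).
  exact: (top_vertex_inj room (fits_p _ p_grid) (fits_p _ p'_grid) eq_top (h_lt m_lt)).
- move=> m m' p p' m_lt m'_lt p_grid p'_grid eq_low.
  have [eq_hm agree] := low_vertex_inj room (h_lt m_lt) (h_lt m'_lt)
    (fits_p _ p_grid) (fits_p _ p'_grid) eq_low.
  split => [|m0 m0_lt m0_ne]; first exact: h_inj eq_hm.
  apply: (embed_at_inj g_inj h_lt h_inj p_grid p'_grid m0_lt).
  by apply: agree; rewrite ?h_lt // eq_h.
- move=> m p p' m_lt p_grid p'_grid.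
  exact: (low_neq_top room d_le (h_lt m_lt) (fits_p _ p_grid) (fits_p _ p'_grid)).
- move=> m p p' m_lt eq_p; apply: low_vertex_local => j _.
  exact: (embed_local d g eq_p).
- move=> m p m_lt p_grid.
  have [adj_lt adj_tl key_lt key_tl] := low_top_edge room d_le (fits_p _ p_grid) (h_lt m_lt).
  by rewrite key_lt key_tl colour.
Qed.

End EmbeddedCycle.

Theorem theorem1p3 (t l : nat) (ht : 0 < t) (hl : 6 <= l) :
  exists k0 : nat, forall k : nat, k0 <= k ->
    forall c : {set 'I_(2 * k + 1)} * {set 'I_(2 * k + 1)} -> 'I_t,
      exists i : 'I_t, has_mono_cycle (2 * l) k c i.
Proof.
pose d := (3 * t).+1.
have [N box_mono] := box_ramsey d l {ffun 'I_d -> 'I_t}.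
exists (d * N + d) => k k_ge c.
pose n := 2 * k + 1.
have d_le : d <= k.+1 by lia.
have room : d * N + (k.+1 - d) <= n by rewrite /n; lia.
pose chi (y : nat -> nat) : {ffun 'I_d -> 'I_t} :=
  [ffun j : 'I_d => c (low_vertex n k d N j y, top_vertex n k d N y)].
have [g [F [g_lt g_inj F_box]]] := box_mono chi.
(* three of the d = 3t+1 blocks carry the same colour i *)
have [i [h [h_lt h_inj h_F]]] := pigeonhole 3 (fun j => F (inord j)).
have h_d m : m < 3 -> h m < d by move/h_lt; rewrite card_ord addn1.
exists i; apply: (embedded_mono_cycle hl d_le room g_lt g_inj h_d h_inj).
move=> p m p_grid m_lt; have l_gt0 : 0 < l by lia.
rewrite -(h_F m m_lt) -(F_box _ (fun j _ => spread_lt h l_gt0 p_grid j)) ffunE.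
by rewrite inordK ?h_d.
Qed.
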